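(* \[\sum_{\pi\in\mathcal{C}_2}q^{|\pi|}=\sum_{m\ge0}\frac{q^{\binom{m+1}{2}}}{(q;q)_m}\sum_{j\ge0}q^{\binom j2}{m\brack j}.\]
   Context: An overpartition is a partition in which the first occurrence of each part size may be overlined, with parts listed in non-increasing order with respect to $1<\bar1<2<\bar2<\cdots$. A part is of size $t$ if it is $t$ or $\bar t$, and $|\pi|$ is the sum of the sizes of the parts. $\mathcal{C}_2$ is the set of overpartitions $(\pi_1,\dots,\pi_\ell)$, including the empty one, such that: - for each $1\le i<\ell$, the size of $\pi_i$ minus the size of $\pi_{i+1}$ is at least $1$, and at least $2$ if $\pi_i$ is non-overlined; - at most one part equals the non-overlined part $1$. $(q;q)_n=\prod_{i=1}^n(1-q^i)$. The Gaussian binomial is ${M\brack N}=\frac{(q;q)_M}{(q;q)_N(q;q)_{M-N}}$ for $0\le N\le M$ and $0$ otherwise. *)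

From mathcomp Require Import all_boot all_order all_algebra.
Set Implicit Arguments. Unset Strict Implicit. Unset Printing Implicit Defensive.
Import Order.TTheory GRing.Theory Num.Theory.
Local Open Scope ring_scope.

Definition fps := nat -> rat.
Definition fadd (f g : fps) : fps := fun n => f n + g n.
Definition fsub (f g : fps) : fps := fun n => f n - g n.
Definition fmul (f g : fps) : fps :=
  fun n => \sum_(k < n.+1) f k * g (n - k)%N.
Definition fzero : fps := fun _ => 0.
Definition fone : fps := fun n => (n == 0%N)%:R.
Definition qpow (k : nat) : fps := fun n => (n == k)%:R.

Fixpoint invseq (f : fps) (n : nat) : seq rat :=
  match n with
  | 0%N => [:: (f 0%N)^-1]
  | n'.+1 => let s := invseq f n' in
      rcons s (- (f 0%N)^-1 * \sum_(k < n'.+1) f k.+1 * nth 0 s (n' - k)%N)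
  end.
Definition finv (f : fps) : fps := fun n => nth 0 (invseq f n) n.

Fixpoint qpoch (n : nat) : fps :=
  match n with
  | 0%N => fone
  | n'.+1 => fmul (qpoch n') (fsub fone (qpow n'.+1))
  end.

Definition gauss (M N : nat) : fps :=
  if (N <= M)%N then fmul (qpoch M) (fmul (finv (qpoch N)) (finv (qpoch (M - N))))
  else fzero.

(* m-th summand of the right-hand side:
   q^{binom(m+1,2)}/(q;q)_m * sum_{j>=0} q^{binom(j,2)} [m brack j]
   (the j-sum is finite since [m brack j] = 0 for j > m) *)
Definition rhs_term (m : nat) : fps :=
  fmul (qpow 'C(m.+1, 2)) (fmul (finv (qpoch m))
    (fun n => \sum_(j < m.+1) fmul (qpow 'C(j, 2)) (gauss m j) n)).

Definition rhs_partial (M : nat) : fps :=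
  fun n => \sum_(m < M.+1) rhs_term m n.

(* a part is (t, b): size t, overlined iff b *)
Definition part := (nat * bool)%type.
(* order 1 < 1bar < 2 < 2bar < ... *)
Definition part_key (p : part) : nat := (2 * p.1 + p.2)%N.
Definition weight (s : seq part) : nat := sumn (map fst s).

(* parts positive, listed in non-increasing order, and for each size at most
   one overlined copy (which, by the ordering, is its first occurrence) *)
Definition is_overpartition (s : seq part) : bool :=
  [&& all (fun p => 0 < p.1)%N s,
      sorted (fun x y => part_key y <= part_key x)%N s &
      all (fun p => count_mem (p.1, true) s <= 1)%N s].

Fixpoint diff_cond (s : seq part) : bool :=
  match s with
  | a :: ((b :: _) as t) => ((b.1 + 1 + ~~ a.2 <= a.1)%N && diff_cond t)
  | _ => true
  end.

Definition inC2 (s : seq part) : bool :=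
  [&& is_overpartition s, diff_cond s & (count_mem (1%N, false) s <= 1)%N].

From HB Require Import structures.
From Pilot Require Import Defs.
From mathcomp Require Import all_boot all_order all_algebra.
From mathcomp Require Import boolp ring zify.
Set Implicit Arguments. Unset Strict Implicit. Unset Printing Implicit Defensive.
Import GRing.Theory.

(* The m-part overpartitions of C_2, read from the smallest part upwards and
   with every part lowered by 1, are the "ascending" sequences [asc 0 false]
   with m parts.  These are enumerated explicitly ([asc_enum]): the smallest
   part is 0 overlined, or d non-overlined (d = 1 when a gap is required below
   it) with a shorter ascending sequence above it, or every part can be lowered
   by one.  Counting gives, for the generating functions C_{m,d},
     (1 - q^(m+1)) C_{m+1,d} = (q^m + q^(d + (d+1)m)) C_{m,true}.
   After making formal power series a commutative ring, the q-Pascal rule gives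
   S_{m+1} = (1 + q^m) S_m for S_m = sum_j q^binom(j,2) [m brack j].  Comparing
   the two recurrences, the m-th term of the right-hand side is q^m C_{m,false},
   the generating function of the m-part C_2 overpartitions; the theorem is the
   coefficientwise statement, witnessed by the explicit list [C2_list N]. *)

Definition shift (k : nat) (s : seq part) : seq part := [seq (p.1 + k, p.2) | p <- s].
Definition unshift (k : nat) (s : seq part) : seq part := [seq (p.1 - k, p.2) | p <- s].

(* [asc c d s]: s is listed in increasing order, each part exceeds the previous
   one by at least 1, and by at least 2 if it is non-overlined; the first part
   is at least c, and at least c + 1 if it is non-overlined and d holds. *)
Fixpoint asc (c : nat) (d : bool) (s : seq part) : bool :=
  if s is p :: t then (c + (d && ~~ p.2) <= p.1) && asc p.1.+1 true t else true.

Lemma size_shift k s : size (shift k s) = size s.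
Proof. exact: size_map. Qed.

Lemma weight_cons p s : weight (p :: s) = p.1 + weight s.
Proof. by []. Qed.

Lemma weight_shift k s : weight (shift k s) = weight s + k * size s.
Proof.
elim: s => [|p s IH]; first by rewrite muln0.
by rewrite (weight_cons (p.1 + k, p.2)) IH weight_cons /=; lia.
Qed.

Lemma weight_rev s : weight (rev s) = weight s.
Proof. by rewrite /weight map_rev sumn_rev. Qed.

Lemma shift_inj k : injective (shift k).
Proof. by apply: inj_map => -[a b] [a' b'] /= [/addIn -> ->]. Qed.

Lemma asc_shift c k d s : asc (c + k) d (shift k s) = asc c d s.
Proof. by elim: s c d => //= p s IH c d; rewrite -addSn IH; congr (_ && _); lia. Qed.

Lemma asc_shift0 k d s : asc k d (shift k s) = asc 0 d s.
Proof. exact: (asc_shift 0). Qed.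

Lemma asc_lb c d s : asc c d s -> all (fun p => c <= p.1) s.
Proof.
elim: s c d => //= p s IH c d /andP [lb_p /IH /sub_all -> //=]; last by move=> q /=; lia.
by rewrite (leq_trans (leq_addr _ _) lb_p).
Qed.

Lemma unshiftK k s : all (fun p => k <= p.1) s -> shift k (unshift k s) = s.
Proof. by elim: s => //= -[a b] s IH /andP [/= le_ka /IH ->]; rewrite subnK. Qed.

Lemma weight_lb c s : all (fun p => c <= p.1) s -> c * size s <= weight s.
Proof.
by elim: s => [|p s IH] /=; rewrite ?muln0 // => /andP [? /IH]; rewrite weight_cons; lia.
Qed.

Definition shift_into (k n m : nat) (L : nat -> seq (seq part)) : seq (seq part) :=
  if k * m <= n then map (shift k) (L (n - k * m)) else [::].

Definition with_first (p : part) (n m : nat) (L : nat -> seq (seq part)) : seq (seq part) :=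
  if p.1 <= n then map (cons p) (shift_into p.1.+1 (n - p.1) m L) else [::].

(* [asc_enum fuel m d n] lists the sequences s with [asc 0 d s], m parts and
   weight n, provided fuel >= n + m: the smallest part is 0 overlined, or d
   non-overlined, or all parts are positive and can be lowered by one. *)
Fixpoint asc_enum (fuel m : nat) (d : bool) (n : nat) : seq (seq part) :=
  match m, fuel with
  | 0, _ => if n == 0 then [:: [::]] else [::]
  | m'.+1, 0 => [::]
  | m'.+1, fuel'.+1 =>
      with_first (0, true) n m' (asc_enum fuel' m' true)
      ++ with_first (nat_of_bool d, false) n m' (asc_enum fuel' m' true)
      ++ shift_into 1 n m (asc_enum fuel' m d)
  end.

Lemma mem_shift_into k n m d L s :
  (k * m <= n -> forall r, (r \in L (n - k * m)) =
     [&& asc 0 d r, size r == m & weight r == n - k * m]) ->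
  (s \in shift_into k n m L) = [&& asc k d s, size s == m & weight s == n].
Proof.
move=> memL; rewrite /shift_into; case: ifP => [fits | /negbT]; last first.
  rewrite -ltnNge in_nil => lt_n; apply/esym/and3P => -[/asc_lb/weight_lb].
  by move=> + /eqP size_s /eqP weight_s; rewrite size_s weight_s leqNgt lt_n.
apply/mapP/and3P => [[r] | [asc_s /eqP size_s /eqP weight_s]].
  rewrite memL // => /and3P [asc_r /eqP size_r /eqP weight_r] ->.
  by rewrite asc_shift0 size_shift weight_shift weight_r size_r subnK.
exists (unshift k s); last by rewrite unshiftK // (asc_lb asc_s).
have s_eq := unshiftK (asc_lb asc_s); move: (unshift k s) s_eq => r s_eq.
move: asc_s size_s weight_s; rewrite -s_eq asc_shift0 size_shift weight_shift.
move=> asc_r size_r weight_r; rewrite memL -weight_r size_r ?leq_addl //.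
by rewrite addnK asc_r !eqxx.
Qed.

Lemma mem_with_first p n m L q t :
  (p.1.+1 * m <= n - p.1 -> forall r, (r \in L (n - p.1 - p.1.+1 * m)) =
     [&& asc 0 true r, size r == m & weight r == n - p.1 - p.1.+1 * m]) ->
  ((q :: t) \in with_first p n m L) =
    (q == p) && [&& asc p.1.+1 true t, size t == m & p.1 + weight t == n].
Proof.
move=> memL; rewrite /with_first; case: leqP => [le_pn | lt_np]; last first.
  by rewrite in_nil; apply/esym/andP => -[_ /and3P [_ _ /eqP]]; lia.
have -> : (p.1 + weight t == n) = (weight t == n - p.1) by apply/eqP/eqP; lia.
rewrite -(mem_shift_into t memL).
apply/mapP/andP => [[r r_in [-> ->]] | [/eqP -> t_in]]; first by rewrite eqxx.
by exists t.
Qed.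

Lemma nil_with_first p n m L : ([::] \in with_first p n m L) = false.
Proof. by rewrite /with_first; case: ifP => // _; apply/mapP => -[]. Qed.

Lemma mem_asc_enum fuel m d n s : n + m <= fuel ->
  (s \in asc_enum fuel m d n) = [&& asc 0 d s, size s == m & weight s == n].
Proof.
elim: fuel m d n s => [|fuel IH] [|m] d n s fuel_ok.
- by case: n {fuel_ok} => [|n]; case: s => [|p t]; rewrite /= ?inE ?andbF.
- by rewrite addnS in fuel_ok.
- by case: n {fuel_ok} => [|n]; case: s => [|p t]; rewrite /= ?inE ?andbF.
have memIH d' n' : n' <= n -> forall r, (r \in asc_enum fuel m d' n') =
    [&& asc 0 d' r, size r == m & weight r == n'].
  by move=> le_n' r; apply: IH; lia.
have memIHS : 1 * m.+1 <= n -> forall r, (r \in asc_enum fuel m.+1 d (n - 1 * m.+1)) =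
    [&& asc 0 d r, size r == m.+1 & weight r == n - 1 * m.+1].
  by move=> fits r; apply: IH; lia.
rewrite /= !mem_cat (mem_shift_into _ memIHS).
case: s => [|[a b] t]; first by rewrite !nil_with_first.
rewrite !mem_with_first ?weight_cons; try by move=> _ r; apply: memIH; rewrite -subnDA leq_subr.
rewrite /= !xpair_eqE eqSS.
by case: b; case: (d); case: a => [|[|a]]; rewrite /= ?andbF ?andbT ?orbF.
Qed.

Lemma shift_into_uniq k n m L :
  (k * m <= n -> uniq (L (n - k * m))) -> uniq (shift_into k n m L).
Proof.
move=> uniqL; rewrite /shift_into; case: ifP => // fits.
by rewrite map_inj_uniq ?uniqL //; apply: shift_inj.
Qed.

Lemma with_first_uniq p n m L :
  uniq (L (n - p.1 - p.1.+1 * m)) -> uniq (with_first p n m L).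
Proof.
rewrite /with_first => uniqL; case: ifP => // _.
rewrite map_inj_uniq; first exact: shift_into_uniq.
by move=> r r' [].
Qed.

Lemma head_with_first p n m L s : s \in with_first p n m L -> ohead s = Some p.
Proof. by rewrite /with_first; case: ifP => // _ /mapP [r _ ->]. Qed.

(* The three blocks of the enumeration are disjoint, as the smallest parts of
   their members differ. *)
Lemma asc_enum_uniq fuel m d n : n + m <= fuel -> uniq (asc_enum fuel m d n).
Proof.
elim: fuel m d n => [|fuel IH] [|m] d n fuel_ok.
- by case: n {fuel_ok}.
- by rewrite addnS in fuel_ok.
- by case: n {fuel_ok}.
set B3 := shift_into 1 n m.+1 (asc_enum fuel m.+1 d).
have low_B3 s p : s \in B3 -> ohead s = Some p -> 1 + (d && ~~ p.2) <= p.1.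
  rewrite (mem_shift_into (d := d)) => [|fits r]; last by apply: mem_asc_enum; lia.
  by case: s => // q t /and3P [/andP [low_q _] _ _] [<-].
rewrite /= !cat_uniq !with_first_uniq ?shift_into_uniq;
  try by [move=> fits; apply: IH; lia | apply: IH; lia].
apply/and3P; split => //; last (apply/and3P; split => //).
- apply/hasPn => s; rewrite mem_cat => /orP [] in_s; apply/negP => /head_with_first.
    by rewrite (head_with_first in_s).
  by move/(low_B3 _ _ in_s).
- apply/hasPn => s in_s; apply/negP => /head_with_first /(low_B3 _ _ in_s) /=.
  by rewrite andbT; case: (d).
Qed.

Definition asc_count (m : nat) (d : bool) (n : nat) : nat := size (asc_enum (n + m) m d n).

Lemma size_asc_enum fuel m d n :
  n + m <= fuel -> size (asc_enum fuel m d n) = asc_count m d n.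
Proof.
move=> fuel_ok; apply: perm_size; apply: uniq_perm; rewrite ?asc_enum_uniq //.
by move=> s; rewrite !mem_asc_enum.
Qed.

Lemma size_shift_into k n m L :
  size (shift_into k n m L) = if k * m <= n then size (L (n - k * m)) else 0.
Proof. by rewrite /shift_into; case: ifP; rewrite ?size_map. Qed.

Lemma size_with_first p n m L : size (with_first p n m L) =
  if p.1 + p.1.+1 * m <= n then size (L (n - (p.1 + p.1.+1 * m))) else 0.
Proof.
rewrite /with_first; case: leqP => [le_pn | lt_np].
  by rewrite size_map size_shift_into subnDA -(leq_add2l p.1) subnKC.
by case: ifP => // fits; lia.
Qed.

Lemma asc_count0 d n : asc_count 0 d n = (n == 0).
Proof. by rewrite /asc_count; case: n. Qed.

Lemma asc_count_rec m d n : asc_count m.+1 d n =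
    (if m <= n then asc_count m true (n - m) else 0)
  + (if d + d.+1 * m <= n then asc_count m true (n - (d + d.+1 * m)) else 0)
  + (if m.+1 <= n then asc_count m.+1 d (n - m.+1) else 0).
Proof.
rewrite {1}/asc_count addnS /= !size_cat !size_with_first size_shift_into.
rewrite /= add0n !mul1n addnA.
by congr (_ + _ + _); case: ifP => // fits; apply: size_asc_enum; lia.
Qed.

Definition gap (p q : part) : bool := p.1.+1 + ~~ q.2 <= q.1.

Lemma gap_trans : transitive gap.
Proof. by move=> q p r; rewrite /gap; case: p.2; case: r.2 => /=; lia. Qed.

Lemma diff_condE s : diff_cond s = sorted (fun p q => gap q p) s.
Proof. by elim: s => // p [|q s] //= ->; rewrite /gap addn1. Qed.

Lemma asc_path p s : asc p.1.+1 true s = path gap p s.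
Proof. by elim: s p => //= q s IH p; rewrite IH. Qed.

Lemma asc1E s : asc 1 false s = all (fun p => 0 < p.1) s && sorted gap s.
Proof.
case: s => //= p s; rewrite asc_path -andbA; congr (_ && _).
apply/idP/andP => [path_s | [] //]; split => //.
by apply: sub_all (order_path_min gap_trans path_s) => q; rewrite /gap; lia.
Qed.

Lemma count_part_le1 (s : seq part) (p : part) : uniq (map fst s) -> count_mem p s <= 1.
Proof.
move=> uniq_sizes; apply: (@leq_trans (count_mem p.1 (map fst s))).
  by rewrite count_map; apply: sub_count => q /= /eqP -> //.
by rewrite count_uniq_mem // leq_b1.
Qed.

Lemma inC2E s : inC2 s = all (fun p => 0 < p.1) s && diff_cond s.
Proof.
rewrite /inC2 /is_overpartition; apply/idP/andP => [/and3P [/and3P [-> _ _] -> _] //|].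
move=> [pos_s /[dup] diff_s ->]; rewrite diff_condE in diff_s.
have sorted_s : sorted (fun p q : part => q.1 < p.1) s.
  by apply: sub_sorted diff_s => p q; rewrite /gap; lia.
have uniq_sizes : uniq (map fst s).
  apply: (sorted_uniq (leT := fun x y => y < x)); last by rewrite sorted_map.
    by move=> x y z /=; lia.
  by move=> x /=; rewrite ltnn.
rewrite pos_s count_part_le1 // andbT /=; apply/andP; split => //; apply/andP; split.
  by apply: sub_sorted sorted_s => p q; rewrite /part_key; case: p.2; case: q.2 => /=; lia.
by apply/allP => p _; apply: count_part_le1.
Qed.

Lemma inC2_asc s : inC2 s = asc 1 false (rev s).
Proof. by rewrite inC2E asc1E all_rev rev_sorted diff_condE. Qed.

Definition C2_list (N : nat) : seq (seq part) :=
  [seq rev (shift 1 r) | m <- iota 0 N.+1, r <- asc_enum N m false (N - m)].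

Lemma mem_C2_list N s : (s \in C2_list N) = inC2 s && (weight s == N).
Proof.
apply/allpairsPdep/andP => [[m [r [m_le r_in ->]]] | [C2_s /eqP weight_s]].
  rewrite mem_iota ltnS in m_le; rewrite mem_asc_enum ?subnK // in r_in.
  case/and3P: r_in => asc_r /eqP size_r /eqP weight_r.
  by rewrite inC2_asc revK asc_shift0 weight_rev weight_shift weight_r size_r mul1n subnK.
rewrite inC2_asc in C2_s; have := unshiftK (asc_lb C2_s).
move: (unshift 1 (rev s)) => r /(congr1 rev); rewrite revK => s_eq; subst s.
rewrite revK asc_shift0 in C2_s; rewrite weight_rev weight_shift mul1n in weight_s.
exists (size r), r; rewrite mem_iota mem_asc_enum -weight_s ?addnK ?C2_s ?eqxx //.
by split; rewrite // add0n ltnS leq_addl.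
Qed.

(* An element of [C2_list N] determines both m (its size) and r. *)
Lemma C2_list_uniq N : uniq (C2_list N).
Proof.
apply: allpairs_uniq_dep => [|m|]; first exact: iota_uniq.
  by rewrite mem_iota ltnS => m_le; apply: asc_enum_uniq; rewrite subnK.
move=> [m r] [m' r'] /allpairsPdep [x [y [m_le r_in [eq_m eq_r]]]].
move=> /allpairsPdep [x' [y' [m'_le r'_in [eq_m' eq_r']]]]; subst x y x' y'.
move=> /= /(congr1 rev); rewrite !revK => /shift_inj eq_r; subst r'.
rewrite !mem_iota !ltnS /= in m_le m'_le.
by move: r_in r'_in; rewrite !mem_asc_enum ?subnK // => /and3P [_ /eqP <- _] /and3P [_ /eqP ->].
Qed.

Lemma size_C2_list N : size (C2_list N) = \sum_(m < N.+1) asc_count m false (N - m).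
Proof.
rewrite size_allpairs_dep sumnE big_map.
rewrite -(big_mkord xpredT (fun m => asc_count m false (N - m))) /index_iota subn0.
by apply: eq_big_seq => m; rewrite mem_iota ltnS => m_le; rewrite size_asc_enum ?subnK.
Qed.

Local Open Scope ring_scope.
(* [finv] of the definitions, not the inverse of an injective map of fingraph. *)
Local Notation finv := Defs.finv.

HB.instance Definition _ := gen_eqMixin fps.
HB.instance Definition _ := gen_choiceMixin fps.

Lemma fps_ext (f g : fps) : (forall n, f n = g n) -> f = g.
Proof. exact: funext. Qed.

Definition fopp (f : fps) : fps := fun n => - f n.

Lemma faddA : associative fadd.
Proof. by move=> f g h; apply: fps_ext => n; rewrite /fadd addrA. Qed.

Lemma faddC : commutative fadd.
Proof. by move=> f g; apply: fps_ext => n; rewrite /fadd addrC. Qed.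

Lemma fadd0 : left_id fzero fadd.
Proof. by move=> f; apply: fps_ext => n; rewrite /fadd add0r. Qed.

Lemma faddN : left_inverse fzero fopp fadd.
Proof. by move=> f; apply: fps_ext => n; rewrite /fadd addNr. Qed.

HB.instance Definition _ := GRing.isZmodule.Build fps faddA faddC fadd0 faddN.

Definition trunc (f : fps) (n : nat) : {poly rat} := \poly_(i < n.+1) f i.

Lemma coef_trunc f n i : (i <= n)%N -> (trunc f n)`_i = f i.
Proof. by move=> le_in; rewrite coef_poly ltnS le_in. Qed.

(* The n-th coefficient of a product only depends on the first n + 1
   coefficients of the factors, so it can be computed with polynomials. *)
Lemma fmul_poly (f g : fps) n (p r : {poly rat}) :
  {in [pred i | i <= n]%N, forall i, p`_i = f i} ->
  {in [pred i | i <= n]%N, forall i, r`_i = g i} ->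
  fmul f g n = (p * r)`_n.
Proof.
move=> pf rg; rewrite coefM /fmul; apply: eq_bigr => i _.
by rewrite pf ?rg // inE ?leq_subr // -ltnS.
Qed.

Lemma fmul_trunc f g n i : (i <= n)%N -> fmul f g i = (trunc f n * trunc g n)`_i.
Proof. by move=> le_in; apply: fmul_poly => j /leq_trans/(_ le_in); apply: coef_trunc. Qed.

Lemma fmulA : associative fmul.
Proof.
move=> f g h; apply: fps_ext => n.
rewrite (@fmul_poly _ _ n (trunc f n) (trunc g n * trunc h n)); last first.
- by move=> i /= le_in; rewrite -fmul_trunc.
- by move=> i /= le_in; rewrite coef_trunc.
rewrite (@fmul_poly _ _ n (trunc f n * trunc g n) (trunc h n)) ?mulrA // => i /= le_in.
  by rewrite -fmul_trunc.
by rewrite coef_trunc.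
Qed.

Lemma fmulC : commutative fmul.
Proof. by move=> f g; apply: fps_ext => n; rewrite !(fmul_trunc _ _ (leqnn n)) mulrC. Qed.

Lemma fmul1 : left_id fone fmul.
Proof.
move=> f; apply: fps_ext => n; rewrite (@fmul_poly _ _ n 1 (trunc f n)).
- by rewrite mul1r coef_trunc.
- by move=> i _; rewrite coef1.
- by move=> i /= le_in; rewrite coef_trunc.
Qed.

Lemma fmulDl : left_distributive fmul fadd.
Proof.
move=> f g h; apply: fps_ext => n.
by rewrite /fmul /fadd -big_split; apply: eq_bigr => i _; rewrite mulrDl.
Qed.

Lemma fone_neq0 : fone != 0.
Proof. by apply/eqP => /(congr1 (fun f : fps => f 0%N)) /eqP; rewrite oner_eq0. Qed.

HB.instance Definition _ :=
  GRing.Zmodule_isComNzRing.Build fps fmulA fmulC fmul1 fmulDl fone_neq0.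

Lemma coef_sum (I : Type) (r : seq I) (P : pred I) (F : I -> fps) n :
  (\sum_(i <- r | P i) F i) n = \sum_(i <- r | P i) F i n.
Proof. by elim/big_rec2: _ => // i x y _ <-. Qed.

Lemma coef_qpowM k (f : fps) n : (qpow k * f) n = if (k <= n)%N then f (n - k)%N else 0.
Proof.
rewrite [LHS](@fmul_poly _ _ n 'X^k (trunc f n)) => [|i _|i le_in]; last first.
- by rewrite coef_trunc.
- by rewrite coefXn.
rewrite coefXnM ltnNge; case: leqP => // le_kn.
by rewrite coef_trunc // leq_subr.
Qed.

Lemma qpowD a b : qpow (a + b) = qpow a * qpow b.
Proof.
apply: fps_ext => n; rewrite coef_qpowM /qpow.
case: leqP => le_an; last by have /negbTE -> : n != (a + b)%N by apply/eqP; lia.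
by have -> : (n - a == b)%N = (n == a + b)%N by apply/eqP/eqP; lia.
Qed.

Lemma qpow0 : qpow 0 = 1.
Proof. by []. Qed.

Lemma size_invseq f n : size (invseq f n) = n.+1.
Proof. by elim: n => //= n IH; rewrite size_rcons IH. Qed.

Lemma nth_invseq f n i : (i <= n)%N -> nth 0 (invseq f n) i = finv f i.
Proof.
elim: n => [|n IH]; first by rewrite leqn0 => /eqP ->.
rewrite leq_eqVlt => /orP [/eqP -> // | lt_in].
by rewrite /= nth_rcons size_invseq lt_in IH.
Qed.

Lemma finvS f n : finv f n.+1 = - (f 0%N)^-1 * \sum_(k < n.+1) f k.+1 * finv f (n - k)%N.
Proof.
rewrite /finv /= nth_rcons size_invseq ltnn eqxx; congr (_ * _).
by apply: eq_bigr => k _; rewrite nth_invseq // leq_subr.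
Qed.

Lemma finvK (f : fps) : f 0%N != 0 -> finv f * f = 1.
Proof.
move=> f0_neq0; rewrite mulrC; apply: fps_ext => -[|n] /=.
  by rewrite /GRing.mul /= /fmul big_ord1 /finv /= divff.
rewrite /GRing.mul /= /fmul big_ord_recl subn0 finvS mulrA mulrN mulrV ?unitfE //.
by rewrite mulN1r addNr.
Qed.

Lemma qpoch0 : qpoch 0 = 1.
Proof. by []. Qed.

Lemma qpochS m : qpoch m.+1 = qpoch m * (1 - qpow m.+1).
Proof. by []. Qed.

Lemma qpoch_const m : qpoch m 0%N = 1.
Proof.
elim: m => //= m IH; rewrite /fmul big_ord1 IH /fsub /fone /qpow /=.
by rewrite subr0 mul1r.
Qed.

Lemma qpochK m : finv (qpoch m) * qpoch m = 1.
Proof. by apply: finvK; rewrite qpoch_const oner_neq0. Qed.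

Lemma finv_qpoch0 : finv (qpoch 0) = 1.
Proof. by have := qpochK 0; rewrite qpoch0 mulr1. Qed.

Lemma gaussE m j :
  (j <= m)%N -> gauss m j = qpoch m * (finv (qpoch j) * finv (qpoch (m - j))).
Proof. by move=> le_jm; rewrite /gauss le_jm. Qed.

Lemma gauss_gt m j : (m < j)%N -> gauss m j = 0.
Proof. by move=> lt_mj; rewrite /gauss leqNgt lt_mj. Qed.

Lemma gaussm0 m : gauss m 0 = 1.
Proof. by rewrite gaussE // finv_qpoch0 subn0 mul1r mulrC qpochK. Qed.

Lemma gaussmm m : gauss m m = 1.
Proof. by rewrite gaussE // subnn finv_qpoch0 mulr1 mulrC qpochK. Qed.

(* The q-Pascal rule [m+1 brack i+1] = [m brack i+1] + q^(m-i) [m brack i] for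
   m = i+k+1; cancelling each q-Pochhammer symbol against its inverse turns it
   into a ring identity. *)
Lemma q_pascal_split i k :
  gauss (i + k).+2 i.+1 = gauss (i + k).+1 i.+1 + qpow k.+1 * gauss (i + k).+1 i.
Proof.
rewrite !gaussE; try lia.
have -> : ((i + k).+2 - i.+1 = k.+1)%N by lia.
have -> : ((i + k).+1 - i.+1 = k)%N by lia.
have -> : ((i + k).+1 - i = k.+1)%N by lia.
rewrite qpochS (_ : (i + k).+2 = i.+1 + k.+1)%N ?qpowD; last by lia.
set B := qpoch (i + k).+1.
move: (qpochK i.+1) (qpochK k.+1) (qpochK i) (qpochK k); rewrite !qpochS.
set ia := finv _; set ic := finv _; set ja := finv _; set jc := finv _.
set a := qpoch i; set c := qpoch k; set qa := qpow i.+1; set qc := qpow k.+1.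
move=> inv_ia inv_ic inv_ja inv_jc.
apply/eqP; rewrite eq_sym -subr_eq0; apply/eqP.
transitivity (B * ia * jc * (1 - ic * (c * (1 - qc))) + B * ia * ic * (1 - qc) * (jc * c - 1)
  + qc * B * ja * ic * (1 - ia * (a * (1 - qa))) + qc * B * ia * ic * (1 - qa) * (ja * a - 1)).
  by ring.
by rewrite inv_ia inv_ic inv_ja inv_jc !subrr !mulr0 !addr0.
Qed.

Lemma q_pascal m i :
  (i <= m)%N -> gauss m.+1 i.+1 = gauss m i.+1 + qpow (m - i) * gauss m i.
Proof.
rewrite leq_eqVlt => /orP [/eqP -> | lt_im].
  by rewrite gaussmm gauss_gt // subnn qpow0 gaussmm add0r mul1r.
have -> : m = (i + (m - i.+1)).+1 by lia.
by rewrite (_ : (i + (m - i.+1)).+1 - i = (m - i.+1).+1)%N ?q_pascal_split; last lia.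
Qed.

Definition qbinom_sum (m : nat) : fps := \sum_(j < m.+1) qpow 'C(j, 2) * gauss m j.

Lemma qbinom_sum0 : qbinom_sum 0 = 1.
Proof. by rewrite /qbinom_sum big_ord1 gaussm0 qpow0 mulr1. Qed.

Lemma qbinom_sumS m : qbinom_sum m.+1 = (1 + qpow m) * qbinom_sum m.
Proof.
rewrite /qbinom_sum big_ord_recl gaussm0.
under eq_bigr => i _ do rewrite lift0 (q_pascal (ltnSE (ltn_ord i))) mulrDr.
rewrite big_split /= addrA mulrDl mul1r; congr (_ + _).
  rewrite [in RHS]big_ord_recl gaussm0 big_ord_recr /= gauss_gt // mulr0 addr0.
  by congr (_ + _); apply: eq_bigr.
rewrite mulr_sumr; apply: eq_bigr => i _.
rewrite mulrA -!qpowD [RHS]mulrA -qpowD; congr (qpow _ * _).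
by rewrite binS bin1 /bump /=; have := ltn_ord i; lia.
Qed.

Definition asc_gf (m : nat) (d : bool) : fps := fun n => (asc_count m d n)%:R.

Lemma asc_gf0 d : asc_gf 0 d = 1.
Proof. by apply: fps_ext => n; rewrite /asc_gf asc_count0. Qed.

Lemma asc_gf_rec m d :
  (1 - qpow m.+1) * asc_gf m.+1 d = (qpow m + qpow (d + d.+1 * m)) * asc_gf m true.
Proof.
apply: fps_ext => n; rewrite mulrBl mulrDl mul1r.
rewrite /GRing.add /= /fadd /GRing.opp /= /fopp !coef_qpowM /asc_gf asc_count_rec !natrD.
by rewrite !(fun_if (fun k => k%:R)) addrK.
Qed.

Lemma bin2S n : 'C(n.+1, 2) = ('C(n, 2) + n)%N.
Proof. by rewrite binS bin1. Qed.

Lemma strict_gf m : qpow 'C(m, 2) * qbinom_sum m.+1 = 2%:R * (qpoch m * asc_gf m true).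
Proof.
elim: m => [|m IH]; first by rewrite qbinom_sumS qbinom_sum0 asc_gf0 qpow0 qpoch0; ring.
rewrite qbinom_sumS bin2S qpowD qpochS.
transitivity (qpow m * (1 + qpow m.+1) * (qpow 'C(m, 2) * qbinom_sum m.+1)); first ring.
transitivity (2%:R * qpoch m * ((1 - qpow m.+1) * asc_gf m.+1 true)); last ring.
rewrite IH asc_gf_rec (_ : true + true.+1 * m = m + m.+1)%N ?qpowD; last by lia.
ring.
Qed.

Lemma free_gf m : qpoch m * (qpow m * asc_gf m false) = qpow 'C(m.+1, 2) * qbinom_sum m.
Proof.
case: m => [|m]; first by rewrite asc_gf0 qbinom_sum0 qpoch0 qpow0 !mulr1.
rewrite qpochS !bin2S !qpowD.
transitivity (qpow m.+1 * qpoch m * ((1 - qpow m.+1) * asc_gf m.+1 false)); first ring.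
transitivity (qpow m.+1 * qpow m * (qpow 'C(m, 2) * qbinom_sum m.+1)); last ring.
by rewrite strict_gf asc_gf_rec /= add0n mul1n; ring.
Qed.

Lemma rhs_termE m : rhs_term m = qpow m * asc_gf m false.
Proof.
rewrite /rhs_term (_ : (fun n => _) = qbinom_sum m); last first.
  by apply: fps_ext => n; rewrite /qbinom_sum coef_sum.
change (qpow 'C(m.+1, 2) * (finv (qpoch m) * qbinom_sum m) = qpow m * asc_gf m false).
by rewrite mulrCA -free_gf !mulrA qpochK mul1r.
Qed.

Lemma rhs_partial_coef M N : (N <= M)%N ->
  rhs_partial M N = \sum_(m < N.+1) (asc_count m false (N - m))%:R.
Proof.
move=> le_NM; rewrite /rhs_partial.
rewrite (big_ord_widen M.+1 (fun m => (asc_count m false (N - m))%:R)) //.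
by rewrite [RHS]big_mkcond; apply: eq_bigr => m _; rewrite rhs_termE coef_qpowM ltnS.
Qed.

Theorem mainTheorem17 :
  forall N : nat, exists L : seq (seq part),
    [/\ uniq L,
        (forall s : seq part, (s \in L) = inC2 s && (weight s == N)) &
        forall M : nat, (N <= M)%N -> (size L)%:R = rhs_partial M N].
Proof.
move=> N; exists (C2_list N); split; [exact: C2_list_uniq | exact: mem_C2_list |].
by move=> M le_NM; rewrite size_C2_list natr_sum rhs_partial_coef.
Qed.
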